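(* Let $\Omega$ be a holomorphic one-form on an open ball $U\subset\mathbb{C}^{2m}$ centered at $0$ containing the closed unit ball $B^{4m}[0,1]$, such that $\Omega\cdot\vec R=0$ where $\vec R=\sum_{j=1}^{2m}z_j\,\partial/\partial z_j$, and such that the origin is the only zero of $\Omega$ in $B^{4m}[0,1]$. Let $A=(a_{ij})$ be the matrix for which the linear part of $\Omega$ at $0$ equals $\Omega_A=\sum_{i,j}a_{ij}z_i\,dz_j$, and assume $A$ is nonsingular. For $t$ in the closed unit disc $\overline{\mathbb{D}}\subset\mathbb{C}$ with $t\ne0$ set $\Omega^t(z)=t^{-1}\Omega(tz)$, and set $\Omega^0=\Omega_A$. Then for every $t\in\overline{\mathbb{D}}$ the only zero of $\Omega^t$ in $B^{4m}[0,1]$ is the origin. *)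

From HB Require Import structures.
From mathcomp Require Import all_boot all_order all_algebra.
From mathcomp Require Import all_classical all_reals all_analysis.
From mathcomp Require Import complex.
Set Implicit Arguments. Unset Strict Implicit. Unset Printing Implicit Defensive.
Import Order.TTheory GRing.Theory Num.Theory.
Import numFieldNormedType.Exports.
Local Open Scope ring_scope.

(* The complex numbers over a real field R, seen as a numFieldType so that
   MathComp-Analysis' normed-space structures (and hence Frechet
   C-differentiability) apply to C and to C^n = 'rV[C]_n. *)
Definition Cplx (R : realType) : numFieldType := R[i].

(* Squared Euclidean norm on C^n = R^{2n}:  sum_k |z_k|^2  (a nonnegative real
   element of C).  B^{2n}[0,1] = { z | eucl_norm2 z <= 1 }. *)
Definition eucl_norm2 (R : realType) (n : nat) (z : 'rV[Cplx R]_n) : Cplx R :=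
  \sum_(k < n) `|z 0 k| ^+ 2.

(* A holomorphic one-form Omega = sum_j f_j dz_j on C^n is encoded by its
   coefficient functions f : 'I_n -> C^n -> C. *)
Definition holomorphic_on (R : realType) (n : nat) (U : set 'rV[Cplx R]_n)
  (f : 'I_n -> 'rV[Cplx R]_n -> Cplx R) : Prop :=
  forall j z, U z -> differentiable (f j) z.

Definition form_zero (R : realType) (n : nat)
  (f : 'I_n -> 'rV[Cplx R]_n -> Cplx R) (z : 'rV[Cplx R]_n) : Prop :=
  forall j, f j z = 0.

Definition contract_radial (R : realType) (n : nat)
  (f : 'I_n -> 'rV[Cplx R]_n -> Cplx R) (z : 'rV[Cplx R]_n) : Cplx R :=
  \sum_(j < n) z 0 j * f j z.

Definition omega_lin (R : realType) (n : nat) (A : 'M[Cplx R]_n)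
  (j : 'I_n) (z : 'rV[Cplx R]_n) : Cplx R :=
  \sum_(i < n) A i j * z 0 i.

Definition omega_t (R : realType) (n : nat) (f : 'I_n -> 'rV[Cplx R]_n -> Cplx R)
  (A : 'M[Cplx R]_n) (t : Cplx R) (j : 'I_n) (z : 'rV[Cplx R]_n) : Cplx R :=
  if t == 0 then omega_lin A j z else t^-1 * f j (t *: z).

From HB Require Import structures.
From mathcomp Require Import all_boot all_order all_algebra.
From mathcomp Require Import all_classical all_reals all_analysis.
From mathcomp Require Import complex.
Import Order.TTheory GRing.Theory Num.Theory.
Import numFieldNormedType.Exports.
Local Open Scope ring_scope.

(* For t <> 0 the zeros of Omega^t are the points z with t z a zero of Omega,
   and t z stays in the closed unit ball when |t| <= 1; for t = 0 the form
   Omega^0 = Omega_A is z |-> z A, whose only zero is 0 since A is invertible. *)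

Section RescaledForms.

Variables (R : realType) (n : nat).
Implicit Types (f : 'I_n -> 'rV[Cplx R]_n -> Cplx R) (A : 'M[Cplx R]_n)
  (t : Cplx R) (z : 'rV[Cplx R]_n).

Lemma eucl_norm2_ge0 z : 0 <= eucl_norm2 z.
Proof. by apply: sumr_ge0 => k _; exact: exprn_ge0. Qed.

Lemma eucl_norm2Z t z : eucl_norm2 (t *: z) = `|t| ^+ 2 * eucl_norm2 z.
Proof.
by rewrite /eucl_norm2 mulr_sumr; apply: eq_bigr => k _; rewrite mxE normrM exprMn.
Qed.

Lemma eucl_norm2Z_le1 t z :
  `|t| <= 1 -> eucl_norm2 z <= 1 -> eucl_norm2 (t *: z) <= 1.
Proof.
move=> t1 z1; rewrite eucl_norm2Z; apply: le_trans z1.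
by apply: ler_piMl; [exact: eucl_norm2_ge0 | exact: exprn_ile1].
Qed.

Lemma omega_linE A j z : omega_lin A j z = (z *m A) 0 j.
Proof. by rewrite mxE; apply: eq_bigr => i _; rewrite mulrC. Qed.

Lemma form_zero_omega_lin A z :
  A \in unitmx -> form_zero (omega_lin A) z <-> z = 0.
Proof.
move=> Au; split => [z0 | -> j]; last by rewrite omega_linE mul0mx mxE.
have zA0 : z *m A = 0 by apply/rowP => j; rewrite -omega_linE z0 mxE.
by rewrite -(mulmxK Au z) zA0 mul0mx.
Qed.

Lemma omega_t0 f A : omega_t f A 0 = omega_lin A.
Proof. by rewrite /omega_t eqxx. Qed.

Lemma form_zero_omega_t f A t z :
  t != 0 -> form_zero (omega_t f A t) z <-> form_zero f (t *: z).
Proof.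
move=> t0; rewrite /form_zero /omega_t (negbTE t0).
split=> fz j; last by rewrite fz mulr0.
by move/eqP: (fz j); rewrite mulf_eq0 invr_eq0 (negbTE t0) => /eqP.
Qed.

End RescaledForms.

Theorem lemma4p11 (R : realType) (m : nat) (r : R)
  (f : 'I_(2 * m) -> 'rV[Cplx R]_(2 * m) -> Cplx R) (A : 'M[Cplx R]_(2 * m)) :
  (* U = open Euclidean ball of radius r > 1 centered at 0, containing B[0,1] *)
  1 < r ->
  holomorphic_on [set z | eucl_norm2 z < ((r%:C)%C : Cplx R) ^+ 2] f ->
  (* Omega . R = 0 on U *)
  (forall z, eucl_norm2 z < ((r%:C)%C : Cplx R) ^+ 2 -> contract_radial f z = 0) ->
  (* the origin is the only zero of Omega in B[0,1] *)
  form_zero f 0 ->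
  (forall z, eucl_norm2 z <= 1 -> form_zero f z -> z = 0) ->
  (* the linear part of Omega at 0 is Omega_A:  d f_j(0) h = sum_i a_ij h_i *)
  (forall j h, 'd (f j) 0 h = omega_lin A j h) ->
  A \in unitmx ->
  forall t : Cplx R, `|t| <= 1 ->
  forall z : 'rV[Cplx R]_(2 * m), eucl_norm2 z <= 1 ->
    ((forall j, omega_t f A t j z = 0) <-> z = 0).
Proof.
move=> _ _ _ f0 f_zero_only0 _ Au t t1 z z1.
have [-> | t0] := eqVneq t 0; first by rewrite omega_t0; exact: form_zero_omega_lin.
rewrite -/(form_zero _ z) form_zero_omega_t //; split => [ftz | -> j].
- have /eqP : t *: z = 0 by apply: f_zero_only0 ftz; exact: eucl_norm2Z_le1.
  by rewrite scalemx_eq0 (negbTE t0) => /eqP.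
- by rewrite scaler0 f0.
Qed.
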